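(* Let $\mathcal L$ be a BQD, and let $\mathcal M_{\mathcal L}$ be its shape algebra. Then, as $\mathbb N^2$-graded vector spaces, $$\mathcal M_{\mathcal L}\cong (TV\otimes TW)/I',$$ where $$I'=TV\otimes \operatorname{Im}a\otimes TV\otimes TW+TV\otimes\operatorname{Im}c\otimes TW+TV\otimes TW\otimes\operatorname{Im}b\otimes TW$$ (here $TV\otimes TW$ is graded with $V$ in degree $(1,0)$ and $W$ in degree $(0,1)$).
   Context: All vector spaces over $\mathbb C$; $TX$ is the tensor algebra of $X$; $\alpha\otimes\beta$ is the tensor product of linear maps, $1_X$ the identity; $\mathbb C\otimes X\cong X\cong X\otimes \mathbb C$, and a map $\mathbb C\to X$ is identified with a vector of $X$. A basic quantum $\mathrm{SL}(3)$ datum (BQD) $\mathcal L$ consists of $3$-dimensional vector spaces $V,W$, linear maps $A:V\otimes V\to W$, $a:W\to V\otimes V$, $B:W\otimes W\to V$, $b:V\to W\otimes W$, $C:W\otimes V\to\mathbb C$, $c:\mathbb C\to V\otimes W$, $D:V\otimes W\to\mathbb C$, $d:\mathbb C\to W\otimes V$, and scalars $q,\omega$ with $q\neq0$, $q^2\neq-1$, $\omega^3=1$, such that, with $\kappa=q^{-2}+1+q^2$, $\rho=(q+q^{-1})^{-2}$: $(1_V\otimes C)(c\otimes 1_V)=1_V$; $(D\otimes 1_V)(1_V\otimes d)=1_V$; $Aa=1_W$; $C(A\otimes 1_V)=\omega D(1_V\otimes A)$; $(1_V\otimes a)c=\omega(a\otimes 1_V)d$; $(1_V\otimes D)(a\otimes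 1_W)=B$; $\omega^2(1_W\otimes A)(d\otimes 1_V)=b$; $\omega(C\otimes 1_V)(1_W\otimes a)=B$; $(A\otimes 1_W)(1_V\otimes c)=b$; $Dc=\kappa$; $Cd=\kappa$; $(1_V\otimes A)(a\otimes 1_V)(A\otimes 1_V)(1_V\otimes a)=\rho(1_{V\otimes W}+cD)$; $(A\otimes 1_V)(1_V\otimes a)(1_V\otimes A)(a\otimes 1_V)=\rho(1_{W\otimes V}+dC)$; and either $q^2=1$ or $q^2$ is not a root of unity. Let $G:=(1_V\otimes A)(a\otimes 1_V):W\otimes V\to V\otimes W$. The shape algebra is $\mathcal M_{\mathcal L}:=T(V\oplus W)/I$, where $I$ is the two-sided ideal generated by $\operatorname{Im}a\subset V\otimes V$, $\operatorname{Im}b\subset W\otimes W$, $\operatorname{Im}c\subset V\otimes W$ and all elements $w\otimes v+(q+q^{-1})G(w\otimes v)$ ($v\in V$, $w\in W$); it is $\mathbb N^2$-graded with $V$ in degree $(1,0)$ and $W$ in degree $(0,1)$. *)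

(* Scalars: C modelled as R[i] (complex numbers over a realType R). *)
From mathcomp Require Import all_boot all_order all_algebra.
From mathcomp Require Import reals complex.
Set Implicit Arguments. Unset Strict Implicit. Unset Printing Implicit Defensive.
Import GRing.Theory Num.Theory.
Local Open Scope ring_scope.

(* Both V and W are 3-dimensional; we fix bases (v_0,v_1,v_2) of V and
   (w_0,w_1,w_2) of W and describe all structure maps by their coordinates:
     A (v_i (x) v_j) = sum_k A i j k w_k        a w_k = sum_{i,j} a k i j v_i (x) v_j
     B (w_i (x) w_j) = sum_k B i j k v_k        b v_k = sum_{i,j} b k i j w_i (x) w_j
     C (w_j (x) v_i) = C j i                    c 1   = sum_{i,j} c i j v_i (x) w_j
     D (v_i (x) w_j) = D i j                    d 1   = sum_{j,i} d j i w_j (x) v_i   *)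

Definition ix := 'I_3.

Section BQDdef.
Variable K : fieldType.

Definition kron (i j : ix) : K := (i == j)%:R.

Record BQD := MkBQD {
  bq_q : K; bq_om : K;
  bq_A : ix -> ix -> ix -> K; bq_a : ix -> ix -> ix -> K;
  bq_B : ix -> ix -> ix -> K; bq_b : ix -> ix -> ix -> K;
  bq_C : ix -> ix -> K; bq_c : ix -> ix -> K;
  bq_D : ix -> ix -> K; bq_d : ix -> ix -> K;
  bq_q_neq0 : bq_q != 0;
  bq_q2_neqN1 : bq_q ^+ 2 != -1;
  bq_om3 : bq_om ^+ 3 = 1;
  (* (1_V (x) C)(c (x) 1_V) = 1_V *)
  bq_ax1 : forall i l, \sum_j bq_c i j * bq_C j l = kron i l;
  (* (D (x) 1_V)(1_V (x) d) = 1_V *)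
  bq_ax2 : forall l i, \sum_j bq_D l j * bq_d j i = kron l i;
  (* A a = 1_W *)
  bq_ax3 : forall k l, \sum_i \sum_j bq_a k i j * bq_A i j l = kron k l;
  (* C (A (x) 1_V) = om D (1_V (x) A) *)
  bq_ax4 : forall i j l, \sum_k bq_A i j k * bq_C k l
                         = bq_om * \sum_k bq_A j l k * bq_D i k;
  (* (1_V (x) a) c = om (a (x) 1_V) d *)
  bq_ax5 : forall i p r, \sum_j bq_c i j * bq_a j p r
                         = bq_om * \sum_j bq_d j r * bq_a j i p;
  (* (1_V (x) D)(a (x) 1_W) = B *)
  bq_ax6 : forall k l i, bq_B k l i = \sum_j bq_a k i j * bq_D j l;
  (* om^2 (1_W (x) A)(d (x) 1_V) = b *)
  bq_ax7 : forall l j k, bq_b l j k = bq_om ^+ 2 * \sum_i bq_d j i * bq_A i l k;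
  (* om (C (x) 1_V)(1_W (x) a) = B *)
  bq_ax8 : forall k l j, bq_B k l j = bq_om * \sum_i bq_a l i j * bq_C k i;
  (* (A (x) 1_W)(1_V (x) c) = b *)
  bq_ax9 : forall l k j, bq_b l k j = \sum_i bq_c i j * bq_A l i k;
  (* D c = kappa *)
  bq_ax10 : \sum_i \sum_j bq_c i j * bq_D i j
            = bq_q ^-2 + 1 + bq_q ^+ 2;
  (* C d = kappa *)
  bq_ax11 : \sum_j \sum_i bq_d j i * bq_C j i
            = bq_q ^-2 + 1 + bq_q ^+ 2;
  (* (1_V (x) A)(a (x) 1_V)(A (x) 1_V)(1_V (x) a) = rho (1_{V(x)W} + c D),
     matrix entry from v_i (x) w_k to v_t (x) w_z *)
  bq_ax12 : forall i k t z,
     \sum_p \sum_r \sum_s \sum_u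
        bq_a k p r * bq_A i p s * bq_a s t u * bq_A u r z
     = (bq_q + bq_q^-1) ^- 2 * (kron i t * kron k z + bq_c t z * bq_D i k);
  (* (A (x) 1_V)(1_V (x) a)(1_V (x) A)(a (x) 1_V) = rho (1_{W(x)V} + d C),
     matrix entry from w_k (x) v_i to w_z (x) v_u *)
  bq_ax13 : forall k i z u,
     \sum_p \sum_r \sum_s \sum_t
        bq_a k p r * bq_A r i s * bq_a s t u * bq_A p t z
     = (bq_q + bq_q^-1) ^- 2 * (kron k z * kron i u + bq_d z u * bq_C k i);
  bq_root : bq_q ^+ 2 = 1 \/ (forall n : nat, (0 < n)%N -> (bq_q ^+ 2) ^+ n != 1)
}.

(* G = (1_V (x) A)(a (x) 1_V) : W (x) V -> V (x) W ;
   G (w_k (x) v_i) = sum_{p,s} bqG k i p s v_p (x) w_s *)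
Definition bqG (L : BQD) (k i p s : ix) : K :=
  \sum_r bq_a L k p r * bq_A L r i s.

(* A letter is a basis vector of V (+) W: (false, i) = v_i, (true, j) = w_j.
   The degree-k part (V (+) W)^{(x) k} has basis the words of length k.    *)
Definition letter := (bool * ix)%type.
Definition isV (x : letter) : bool := ~~ x.1.
Definition isW (x : letter) : bool := x.1.

Definition Tdeg (k : nat) := {ffun k.-tuple letter -> K^o}.

Definition basisT k (t : k.-tuple letter) : Tdeg k :=
  [ffun u => (u == t)%:R].

Definition elem2 (f : letter -> letter -> K) : Tdeg 2 :=
  [ffun t => f (tnth t ord0) (tnth t (@Ordinal 2 1 isT))].

Definition dflt : letter := (false, ord0).

(* e_s' (x) g (x) e_s'' where s' = first i letters of s, s'' = letters of s
   after position i+1 (the letters of s at positions i, i+1 are ignored).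
   Meaningful when i.+1 < k. *)
Definition placed k (s : k.-tuple letter) (i : nat) (g : Tdeg 2) : Tdeg k :=
  [ffun t : k.-tuple letter =>
     if [forall j : 'I_k, ((j != i :> nat) && (j != i.+1 :> nat))
                            ==> (tnth t j == tnth s j)]
     then g [tuple nth dflt t i; nth dflt t i.+1] else 0].

(* degree-k part of the two-sided ideal generated by degree-2 elements gs *)
Definition ideal_deg k (gs : seq (Tdeg 2)) : {vspace Tdeg k} :=
  <<flatten [seq [seq placed s i g | i <- iota 0 k.-1, g <- gs]
              | s <- enum [set: k.-tuple letter]]>>%VS.

(* bidegree (m,n) part of T(V (+) W), inside degree m+n *)
Definition Tbideg m n : {vspace Tdeg (m + n)} :=
  <<[seq basisT t | t : (m + n).-tuple letter <- enum [set: (m + n).-tuple letter] & count isV t == m]>>%VS.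

Variable L : BQD.

Definition gen_a (k : ix) : Tdeg 2 :=
  elem2 (fun x y => if isV x && isV y then bq_a L k x.2 y.2 else 0).
Definition gen_b (k : ix) : Tdeg 2 :=
  elem2 (fun x y => if isW x && isW y then bq_b L k x.2 y.2 else 0).
Definition gen_c : Tdeg 2 :=
  elem2 (fun x y => if isV x && isW y then bq_c L x.2 y.2 else 0).
(* w_k (x) v_i + (q + q^-1) G (w_k (x) v_i) *)
Definition gen_rel (k i : ix) : Tdeg 2 :=
  elem2 (fun x y =>
    if isW x && isV y then kron k x.2 * kron i y.2
    else if isV x && isW y then (bq_q L + (bq_q L)^-1) * bqG L k i x.2 y.2
    else 0).

Definition gens_a := [seq gen_a k | k <- enum [set: ix]].
Definition gens_b := [seq gen_b k | k <- enum [set: ix]].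
Definition gens_rel := [seq gen_rel k i | k <- enum [set: ix], i <- enum [set: ix]].

Definition idealI k : {vspace Tdeg k} :=
  ideal_deg k (gens_a ++ gens_b ++ gen_c :: gens_rel).

(* bidegree (m,n) part of the ideal I (I is bihomogeneous) *)
Definition idealI_bideg m n : {vspace Tdeg (m + n)} :=
  (idealI (m + n) :&: Tbideg m n)%VS.

(* (TV (x) TW)_(m,n) = V^{(x) m} (x) W^{(x) n}: words whose first m letters
   are in V and last n letters are in W *)
Definition VWword m n (t : (m + n).-tuple letter) : bool :=
  [forall j : 'I_(m + n), isW (tnth t j) == (m <= j)%N].

Definition TVTW m n : {vspace Tdeg (m + n)} :=
  <<[seq basisT t | t <- enum [set: (m + n).-tuple letter] & VWword t]>>%VS.

(* I'_(m,n) = (TV (x) Im a (x) TV (x) TW + TV (x) Im c (x) TW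
               + TV (x) TW (x) Im b (x) TW)_(m,n) *)
Definition idealI' m n : {vspace Tdeg (m + n)} :=
  (<<flatten [seq [seq placed s i g | i <- iota 0 m.-1, g <- gens_a]
              | s <- enum [set: (m + n).-tuple letter] & VWword s]>>
 + <<[seq placed s m.-1 gen_c | s <- enum [set: (m + n).-tuple letter]
                                & (0 < m)%N && (0 < n)%N && VWword s]>>
 + <<flatten [seq [seq placed s i g | i <- iota m n.-1, g <- gens_b]
              | s <- enum [set: (m + n).-tuple letter] & VWword s]>>)%VS.

End BQDdef.

(* f induces an isomorphism of vector spaces U1/J1 -> U2/J2
   (where J1 <= U1, J2 <= U2 are subspaces of the ambient spaces) *)
Definition induces_quot_iso (F : fieldType) (vT : vectType F)
    (U1 J1 U2 J2 : {vspace vT}) (f : 'End(vT)) : Prop :=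
  [/\ (f @: U1 <= U2)%VS,
      (f @: J1 <= J2)%VS,
      (forall x, x \in U1 -> f x \in J2 -> x \in J1) &
      (U2 <= f @: U1 + J2)%VS].

(* Orient the defining relation of the shape algebra as the rewriting rule
   [w (x) v ~> -(q + q^-1) G (w (x) v)], which moves letters of V to the left of
   letters of W.  Each rewrite lowers the sum of the positions of the V-letters, and
   rewrites at disjoint positions commute, so every word t has a well-defined normal
   form [nf t] in TV (x) TW, and [t - nf t] lies in I.  Restricted to bidegree (m, n),
   the linear extension of [nf] is the wanted isomorphism as soon as it maps the other
   generators of I (elements of Im a, Im b, Im c placed anywhere in a word) into I'.
   This is proved by induction on the weight: a rewrite away from the generator
   commutes with it, and where the generator overlaps an inversion the BQD axioms,
   chiefly (1 (x) A)(a (x) 1)(A (x) 1)(1 (x) a) = rho (1 + c D), turn the result into a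
   combination of generators of lower weight. *)

From HB Require Import structures.
From mathcomp Require Import all_boot all_order all_algebra.
From mathcomp Require Import reals complex.
From mathcomp Require Import zify ring.
Set Bullet Behavior "Strict Subproofs".
Set Implicit Arguments. Unset Strict Implicit. Unset Printing Implicit Defensive.
Import GRing.Theory Num.Theory.
Local Open Scope ring_scope.

Lemma exchange_big2 (V : nmodType) (I J : finType) (F : I -> I -> J -> J -> V) :
  \sum_a \sum_b \sum_c \sum_d F a b c d = \sum_c \sum_d \sum_a \sum_b F a b c d.
Proof.
under eq_bigr => a _ do under eq_bigr => b _ do rewrite pair_big.
rewrite pair_big exchange_big [RHS]pair_big /=.
by apply: eq_bigr => -[c d] _; rewrite pair_big.
Qed.

Lemma sum_scale_exchange (R : comNzRingType) (V : lmodType R) (I J : finType)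
    (a : I -> I -> R) (b : J -> J -> R) (F : I -> I -> J -> J -> V) :
  \sum_p \sum_s a p s *: \sum_p' \sum_s' b p' s' *: F p s p' s'
  = \sum_p' \sum_s' b p' s' *: \sum_p \sum_s a p s *: F p s p' s'.
Proof.
have distr (I' J' : finType) (c : I' -> I' -> R) (d : J' -> J' -> R)
    (G : I' -> I' -> J' -> J' -> V) :
    \sum_p \sum_s c p s *: \sum_p' \sum_s' d p' s' *: G p s p' s'
    = \sum_p \sum_s \sum_p' \sum_s' (c p s * d p' s') *: G p s p' s'.
  apply: eq_bigr => p _; apply: eq_bigr => s _; rewrite scaler_sumr.
  by apply: eq_bigr => p' _; rewrite scaler_sumr; apply: eq_bigr => s' _; rewrite scalerA.
rewrite !distr exchange_big2; do 4! (apply: eq_bigr => ? _); by rewrite mulrC.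
Qed.

Lemma sum_kron_mul (R : nzRingType) (I : finType) (j : I) (F : I -> R) :
  \sum_x (x == j)%:R * F x = F j.
Proof. by rewrite (bigD1 j) //= eqxx mul1r big1 ?addr0 // => x /negbTE ->; rewrite mul0r. Qed.

Lemma sum_kron_scale (R : nzRingType) (V : lmodType R) (I : finType) (j : I) (F : I -> V) :
  \sum_x (x == j)%:R *: F x = F j.
Proof. by rewrite (bigD1 j) //= eqxx scale1r big1 ?addr0 // => x /negbTE ->; rewrite scale0r. Qed.

Lemma sum_ix (V : nmodType) (F : ix -> V) :
  \sum_i F i = F ord0 + (F (lift ord0 ord0) + (F (lift ord0 (lift ord0 ord0)) + 0)).
Proof. by rewrite !big_ord_recl big_ord0. Qed.

Ltac decide_nat_eqs :=
  repeat match goal with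
  | |- context [?a == ?b :> nat] =>
      first [ rewrite (_ : (a == b) = true); last by lia
            | rewrite (_ : (a == b) = false); last by lia ]
  end.

(** * Words and inversions *)

Section Words.
Variable k : nat.
Local Notation word := (k.-tuple letter).

Definition wnth (t : word) (j : nat) : letter := nth dflt t j.

Definition wset (t : word) (j : nat) (x : letter) : word :=
  [tuple (if i == j :> nat then x else tnth t i) | i < k].

Definition wset2 (t : word) j x y := wset (wset t j x) j.+1 y.
Definition wset3 (t : word) j x y z := wset (wset2 t j x y) j.+2 z.

Lemma wnth_setE t j x i : (i < k)%N ->
  wnth (wset t j x) i = if i == j then x else wnth t i.
Proof.
by move=> ik; rewrite /wnth; change i with (nat_of_ord (Ordinal ik)); rewrite -!tnth_nth tnth_mktuple.
Qed.

Lemma wnth_set t j x i : (j < k)%N ->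
  wnth (wset t j x) i = if i == j then x else wnth t i.
Proof.
move=> jk; case: (ltnP i k) => ik; first exact: wnth_setE.
rewrite /wnth !nth_default ?size_tuple //; case: eqP => // eij; lia.
Qed.

Lemma eq_from_wnth (t t' : word) :
  (forall i, (i < k)%N -> wnth t i = wnth t' i) -> t = t'.
Proof. by move=> eqt; apply: eq_from_tnth => i; rewrite !(tnth_nth dflt); exact: eqt. Qed.

Lemma wset_id t j : (j < k)%N -> wset t j (wnth t j) = t.
Proof. by move=> jk; apply: eq_from_wnth => i ik; rewrite wnth_setE //; case: eqP => [->|]. Qed.

End Words.

Ltac solve_word :=
  let i := fresh "i" in let ik := fresh "ik" in
  apply: eq_from_wnth => i ik; rewrite /wset3 /wset2 !(wnth_setE _ _ _ ik);
  do ! case: eqP => ?; first [done | congruence | lia].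

Section Inversions.
Variable k : nat.
Local Notation word := (k.-tuple letter).
Implicit Types (t : word) (f : nat -> nat).

Definition inversion t (j : nat) : bool :=
  [&& (j.+1 < k)%N, isW (wnth t j) & isV (wnth t j.+1)].

Definition vweight f t : nat := (\sum_(0 <= i < k) isV (wnth t i) * f i)%N.

Lemma count_vweight t : count isV t = vweight (fun=> 1%N) t.
Proof.
have nthE s : count isV s = (\sum_(0 <= i < size s) isV (nth dflt s i))%N.
  elim: s => [|x s IH] /=; first by rewrite big_geq.
  by rewrite big_nat_recl // IH.
by rewrite nthE size_tuple; apply: eq_bigr => i _; rewrite muln1.
Qed.

Lemma vweight_local f t t' j w : (j + w <= k)%N ->
    (forall i, (i < j)%N || (j + w <= i < k)%N -> isV (wnth t i) = isV (wnth t' i)) ->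
  (vweight f t + \sum_(j <= i < j + w) isV (wnth t' i) * f i =
   vweight f t' + \sum_(j <= i < j + w) isV (wnth t i) * f i)%N.
Proof.
move=> jwk eqt; pose F := fun (u : word) i => (isV (wnth u i) * f i)%N.
have split u : vweight f u = (\sum_(0 <= i < j) F u i + \sum_(j <= i < j + w) F u i
                              + \sum_(j + w <= i < k) F u i)%N.
  by rewrite /vweight -!big_cat_nat //; lia.
have outside (m n : nat) : (forall i, (m <= i < n)%N -> F t i = F t' i) ->
    (\sum_(m <= i < n) F t i = \sum_(m <= i < n) F t' i)%N.
  exact: eq_big_nat.
suff : (vweight f t + \sum_(j <= i < j + w) F t' i = vweight f t' + \sum_(j <= i < j + w) F t i)%N
  by [].
rewrite !split (outside 0%N j) ?(outside (j + w)%N k); first lia.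
- by move=> i /andP [ji ik]; rewrite /F eqt // ji ik orbT.
- by move=> i /andP [_ ij]; rewrite /F eqt ?ij.
Qed.

Lemma sum_window2 (F : nat -> nat) j : (\sum_(j <= i < j + 2) F i = F j + F j.+1)%N.
Proof. by rewrite addn2 big_nat_recr //= big_nat1. Qed.

Lemma sum_window3 (F : nat -> nat) j :
  (\sum_(j <= i < j + 3) F i = F j + F j.+1 + F j.+2)%N.
Proof. by rewrite addn3 big_nat_recr ?leqW //= big_nat_recr //= big_nat1. Qed.

Lemma inversions_apart t j j' : inversion t j -> inversion t j' -> j != j' ->
  (j.+1 < j')%N || (j'.+1 < j)%N.
Proof.
case/and3P=> _ wj vj /and3P [_ wj' vj'] ne.
have h1 : j' != j.+1 by apply: contraTneq wj' => ->.
have h2 : j != j'.+1 by apply: contraTneq wj => ->.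
move: ne h1 h2; rewrite !neq_ltn; lia.
Qed.

End Inversions.

(** * The normal form of a word *)

Section NormalForm.
Variables (K : fieldType) (L : BQD K) (k : nat).
Local Notation word := (k.-tuple letter).
Local Notation T := (Tdeg K k).
Implicit Types (t : word) (p s : ix).

Definition rel_scale : K := - (bq_q L + (bq_q L)^-1).

Definition swap t j p s : word := wset2 t j (false, p) (true, s).

Definition swap_coef t j p s : K :=
  rel_scale * bqG L (wnth t j).2 (wnth t j.+1).2 p s.

Lemma wnth_swap_far t j p s i : (j.+1 < k)%N -> i != j -> i != j.+1 ->
  wnth (swap t j p s) i = wnth t i.
Proof. by move=> jk ij ij1; rewrite /swap /wset2 !wnth_set ?(negbTE ij) ?(negbTE ij1) //; lia. Qed.

Lemma swapC t j j' p s p' s' : (j.+1 < j')%N || (j'.+1 < j)%N ->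
  (j.+1 < k)%N -> (j'.+1 < k)%N ->
  swap (swap t j p s) j' p' s' = swap (swap t j' p' s') j p s.
Proof. by move=> apart jk jk'; rewrite /swap; solve_word. Qed.

Lemma vweight_swap f t j p s : inversion t j ->
  (vweight f (swap t j p s) + f j.+1 = vweight f t + f j)%N.
Proof.
case/and3P=> jk wj vj.
have agree i : (i < j)%N || (j + 2 <= i < k)%N ->
    isV (wnth t i) = isV (wnth (swap t j p s) i).
  by case/orP=> ?; rewrite wnth_swap_far //; lia.
have := @vweight_local k f t (swap t j p s) j 2 ltac:(lia) agree.
have vj' : isV (wnth t j) = false by move: wj; rewrite /isV /isW => ->.
rewrite !sum_window2 /swap /wset2 !wnth_set ?eqxx; try lia.
by decide_nat_eqs; rewrite vj vj' /=; lia.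
Qed.

Lemma vweight_swapS t j p s : inversion t j ->
  (vweight id (swap t j p s)).+1 = vweight id t.
Proof. by move=> /(vweight_swap id p s) /=; lia. Qed.

Lemma count_swap t j p s : inversion t j -> count isV (swap t j p s) = count isV t.
Proof. by move=> /(vweight_swap (fun=> 1%N) p s); rewrite !count_vweight; lia. Qed.

Definition first_inversion t : option 'I_k := [pick j : 'I_k | inversion t j].

(* Each rewrite lowers [vweight id] by one, so [vweight id t] is enough fuel. *)
Fixpoint nf_iter (n : nat) t : T :=
  if n is n'.+1 then
    if first_inversion t is Some j then
      \sum_p \sum_s swap_coef t j p s *: nf_iter n' (swap t j p s)
    else basisT K t
  else basisT K t.

Definition nf t : T := nf_iter (vweight id t) t.

Lemma first_inversionP t j : first_inversion t = Some j -> inversion t j.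
Proof. by rewrite /first_inversion; case: pickP => // j' ? [<-]. Qed.

Lemma first_inversionN t : first_inversion t = None -> ~~ [exists j : 'I_k, inversion t j].
Proof. by rewrite /first_inversion; case: pickP => // none _; apply/existsP => -[j]; rewrite none. Qed.

Lemma first_inversion_None t : ~~ [exists j : 'I_k, inversion t j] -> first_inversion t = None.
Proof. by rewrite /first_inversion; case: pickP => // j inv_j /existsP []; exists j. Qed.

Lemma nf_normal t : first_inversion t = None -> nf t = basisT K t.
Proof. by rewrite /nf; case: (vweight id t) => //= n ->. Qed.

Lemma nf_first t j : first_inversion t = Some j ->
  nf t = \sum_p \sum_s swap_coef t j p s *: nf (swap t j p s).
Proof.
move=> first; have inv_j := first_inversionP first.
rewrite /nf -(vweight_swapS ord0 ord0 inv_j) /= first.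
apply: eq_bigr => p _; apply: eq_bigr => s _; congr (_ *: nf_iter _ _).
by apply/eqP; rewrite -eqSS !vweight_swapS.
Qed.

Section Confluence.
Variables (j j' : nat) (p s : ix).
Hypotheses (apart : (j.+1 < j')%N || (j'.+1 < j)%N) (jk' : (j'.+1 < k)%N).

Lemma inversion_swap_far t : inversion t j -> inversion (swap t j' p s) j.
Proof.
case/and3P=> jk wj vj; rewrite /inversion jk !wnth_swap_far ?wj ?vj //; lia.
Qed.

Lemma swap_coef_swap_far t p' s' : (j.+1 < k)%N ->
  swap_coef (swap t j' p s) j p' s' = swap_coef t j p' s'.
Proof. by move=> jk; rewrite /swap_coef !wnth_swap_far //; lia. Qed.

End Confluence.

Lemma nf_step t j : inversion t j ->
  nf t = \sum_p \sum_s swap_coef t j p s *: nf (swap t j p s).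
Proof.
move: {-1}(vweight id t).+1 (ltnSn (vweight id t)) => N.
elim: N t j => // N IH t j ltN inv_j.
have jk : (j.+1 < k)%N by case/and3P: inv_j.
case E: (first_inversion t) => [j0|]; last first.
  by move/first_inversionN: E => /existsP []; exists (Ordinal (ltnW jk)).
rewrite (nf_first E); have inv_j0 := first_inversionP E.
have j0k : (j0.+1 < k)%N by case/and3P: inv_j0.
have [<- // | ne] := eqVneq (j0 : nat) j.
have apart : (j.+1 < j0)%N || (j0.+1 < j)%N.
  by apply: inversions_apart inv_j inv_j0 _; rewrite eq_sym.
have apart' : (j0.+1 < j)%N || (j.+1 < j0)%N by rewrite orbC.
have lt_swap j1 p s : inversion t j1 -> (vweight id (swap t j1 p s) < N)%N.
  by move=> inv1; rewrite -ltnS (vweight_swapS p s inv1) (leq_trans _ ltN).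
transitivity (\sum_p \sum_s swap_coef t j0 p s *:
   \sum_p' \sum_s' swap_coef t j p' s' *: nf (swap (swap t j0 p s) j p' s')).
  apply: eq_bigr => p _; apply: eq_bigr => s _.
  rewrite (IH _ j (lt_swap _ _ _ inv_j0)) ?inversion_swap_far //.
  by congr (_ *: _); apply: eq_bigr => p' _; apply: eq_bigr => s' _; rewrite swap_coef_swap_far.
rewrite sum_scale_exchange; apply: eq_bigr => p _; apply: eq_bigr => s _; congr (_ *: _).
rewrite (IH _ j0 (lt_swap _ _ _ inv_j)) ?inversion_swap_far //.
apply: eq_bigr => p' _; apply: eq_bigr => s' _.
by rewrite swap_coef_swap_far // swapC.
Qed.
End NormalForm.

(** * Tensors placed in a word *)

Section Placement.
Variables (K : fieldType) (L : BQD K) (k : nat).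
Local Notation word := (k.-tuple letter).
Local Notation T := (Tdeg K k).
Implicit Types (s t : word).

Definition nfL (u : T) : T := \sum_t u t *: nf L t.

Lemma nfL_is_linear : linear nfL.
Proof.
move=> a u v; rewrite /nfL scaler_sumr -big_split; apply: eq_bigr => t _.
by rewrite !ffunE scalerDl scalerA.
Qed.

HB.instance Definition _ := GRing.isLinear.Build K T T *:%R nfL nfL_is_linear.

Lemma nfL_basis t : nfL (basisT K t) = nf L t.
Proof.
rewrite /nfL (bigD1 t) //= big1 ?addr0 => [|t' /negbTE ne]; first by rewrite ffunE eqxx scale1r.
by rewrite ffunE ne scale0r.
Qed.

Definition place2 s i f1 f2 (h : ix -> ix -> K) : T :=
  \sum_x \sum_y h x y *: basisT K (wset2 s i (f1, x) (f2, y)).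

Definition place3 s i f1 f2 f3 (h : ix -> ix -> ix -> K) : T :=
  \sum_x \sum_y \sum_z h x y z *: basisT K (wset3 s i (f1, x) (f2, y) (f3, z)).

Lemma eq_place2 s i f1 f2 h1 h2 : h1 =2 h2 -> place2 s i f1 f2 h1 = place2 s i f1 f2 h2.
Proof. by move=> e; rewrite /place2; do 2! (apply: eq_bigr => ? _); rewrite e. Qed.

Lemma eq_place3 s i f1 f2 f3 h1 h2 : (forall x y z, h1 x y z = h2 x y z) ->
  place3 s i f1 f2 f3 h1 = place3 s i f1 f2 f3 h2.
Proof. by move=> e; rewrite /place3; do 3! (apply: eq_bigr => ? _); rewrite e. Qed.

Lemma place2Z s i f1 f2 c h :
  place2 s i f1 f2 (fun x y => c * h x y) = c *: place2 s i f1 f2 h.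
Proof.
rewrite /place2 scaler_sumr; apply: eq_bigr => x _; rewrite scaler_sumr.
by apply: eq_bigr => y _; rewrite scalerA.
Qed.

Lemma place3Z s i f1 f2 f3 c h :
  place3 s i f1 f2 f3 (fun x y z => c * h x y z) = c *: place3 s i f1 f2 f3 h.
Proof.
rewrite /place3 scaler_sumr; apply: eq_bigr => x _; rewrite scaler_sumr.
apply: eq_bigr => y _; rewrite scaler_sumr; apply: eq_bigr => z _; by rewrite scalerA.
Qed.

Lemma place3D s i f1 f2 f3 h1 h2 :
  place3 s i f1 f2 f3 (fun x y z => h1 x y z + h2 x y z)
  = place3 s i f1 f2 f3 h1 + place3 s i f1 f2 f3 h2.
Proof.
rewrite /place3 -big_split; apply: eq_bigr => x _; rewrite -big_split.
apply: eq_bigr => y _; rewrite -big_split; apply: eq_bigr => z _; exact: scalerDl.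
Qed.

Lemma place2_sum s i f1 f2 (e : ix -> K) (g : ix -> ix -> ix -> K) :
  place2 s i f1 f2 (fun x y => \sum_r e r * g r x y) = \sum_r e r *: place2 s i f1 f2 (g r).
Proof.
under [RHS]eq_bigr => r _ do rewrite -place2Z.
rewrite /place2 [RHS]exchange_big; apply: eq_bigr => x _; rewrite [RHS]exchange_big.
by apply: eq_bigr => y _; rewrite scaler_suml.
Qed.

Lemma place3_split_first s i f1 f2 f3 h :
  place3 s i f1 f2 f3 h = \sum_x place2 (wset s i (f1, x)) i.+1 f2 f3 (h x).
Proof. by []. Qed.

Lemma place3_split_last s i f1 f2 f3 h : (i.+2 < k)%N ->
  place3 s i f1 f2 f3 h = \sum_z place2 (wset s i.+2 (f3, z)) i f1 f2 (fun x y => h x y z).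
Proof.
move=> ik; rewrite /place3 /place2 pair_big exchange_big /=; apply: eq_bigr => z _.
rewrite pair_big; apply: eq_bigr => -[x y] _ /=; congr (_ *: basisT K _); solve_word.
Qed.

Lemma nfL_place2 s i f1 f2 h :
  nfL (place2 s i f1 f2 h) = \sum_x \sum_y h x y *: nf L (wset2 s i (f1, x) (f2, y)).
Proof.
rewrite linear_sum; apply: eq_bigr => x _; rewrite linear_sum; apply: eq_bigr => y _.
by rewrite linearZ /= nfL_basis.
Qed.

Lemma nfL_place2_WV s i h : (i.+1 < k)%N ->
  nfL (place2 s i true false h)
  = nfL (place2 s i false true
           (fun p q => \sum_u \sum_v rel_scale L * bqG L u v p q * h u v)).
Proof.
move=> ik; rewrite !nfL_place2.
transitivity (\sum_u \sum_v \sum_p \sum_q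
   (rel_scale L * bqG L u v p q * h u v) *: nf L (wset2 s i (false, p) (true, q))).
  apply: eq_bigr => u _; apply: eq_bigr => v _.
  have inv_i : inversion (wset2 s i (true, u) (false, v)) i.
    by rewrite /inversion /wset2 !wnth_set; try lia; decide_nat_eqs; rewrite ik.
  rewrite (nf_step L inv_i) scaler_sumr; apply: eq_bigr => p _.
  rewrite scaler_sumr; apply: eq_bigr => q _; rewrite scalerA mulrC.
  rewrite /swap_coef /swap /wset2 !wnth_set; try lia; decide_nat_eqs.
  by congr (_ *: nf L _); solve_word.
rewrite exchange_big2; apply: eq_bigr => p _; apply: eq_bigr => q _.
by rewrite scaler_suml; apply: eq_bigr => u _; rewrite scaler_suml.
Qed.

Lemma nfL_place3_WV12 s i f3 h : (i.+2 < k)%N ->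
  nfL (place3 s i true false f3 h)
  = nfL (place3 s i false true f3
           (fun p q z => \sum_u \sum_v rel_scale L * bqG L u v p q * h u v z)).
Proof.
move=> ik; rewrite !place3_split_last // !linear_sum; apply: eq_bigr => z _.
by apply: nfL_place2_WV; lia.
Qed.

Lemma nfL_place3_WV23 s i f1 h : (i.+2 < k)%N ->
  nfL (place3 s i f1 true false h)
  = nfL (place3 s i f1 false true
           (fun x p q => \sum_v \sum_w rel_scale L * bqG L v w p q * h x v w)).
Proof.
move=> ik; rewrite !place3_split_first !linear_sum; apply: eq_bigr => x _.
by apply: nfL_place2_WV; lia.
Qed.

Lemma place2_extend_left s j f0 k0 f1 f2 h : (j.+2 < k)%N -> wnth s j = (f0, k0) ->
  place2 s j.+1 f1 f2 h = place3 s j f0 f1 f2 (fun x y z => (x == k0)%:R * h y z).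
Proof.
move=> jk sj; rewrite place3_split_first.
under eq_bigr => x _ do rewrite (place2Z _ _ _ _ _ h).
by rewrite sum_kron_scale -sj wset_id //; lia.
Qed.

Lemma place2_extend_right s i f3 k3 f1 f2 h : (i.+2 < k)%N -> wnth s i.+2 = (f3, k3) ->
  place2 s i f1 f2 h = place3 s i f1 f2 f3 (fun x y z => h x y * (z == k3)%:R).
Proof.
move=> ik si; rewrite place3_split_last //.
rewrite (eq_bigr (fun z => (z == k3)%:R *: place2 (wset s i.+2 (f3, z)) i f1 f2 h)).
  by rewrite sum_kron_scale -si wset_id.
by move=> z _; rewrite -place2Z; apply: eq_place2 => x y; rewrite mulrC.
Qed.

Lemma nfL_place2_far s i f1 f2 h j : (i.+1 < k)%N -> inversion s j ->
    (j.+1 < i)%N || (i.+1 < j)%N ->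
  nfL (place2 s i f1 f2 h)
  = \sum_p \sum_q swap_coef L s j p q *: nfL (place2 (swap s j p q) i f1 f2 h).
Proof.
move=> ik inv_j apart; have jk : (j.+1 < k)%N by case/and3P: inv_j.
have far x y l : (l == j) || (l == j.+1) -> wnth (wset2 s i (f1, x) (f2, y)) l = wnth s l.
  by case/orP=> /eqP ->; rewrite /wset2 !wnth_set; try lia; decide_nat_eqs.
rewrite nfL_place2; under [RHS]eq_bigr => p _ do under eq_bigr => q _ do rewrite nfL_place2.
rewrite -sum_scale_exchange; apply: eq_bigr => x _; apply: eq_bigr => y _.
have inv_j' : inversion (wset2 s i (f1, x) (f2, y)) j by rewrite /inversion !far ?eqxx ?orbT.
rewrite (nf_step L inv_j'); congr (_ *: _); apply: eq_bigr => p _; apply: eq_bigr => q _.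
by rewrite /swap_coef !far ?eqxx ?orbT //; congr (_ *: nf L _); rewrite /swap; solve_word.
Qed.

Lemma nfL_place2_pass_W s j k0 f2 h : (j.+2 < k)%N -> wnth s j = (true, k0) ->
  nfL (place2 s j.+1 false f2 h)
  = nfL (place3 s j false true f2 (fun p q z => \sum_v rel_scale L * bqG L k0 v p q * h v z)).
Proof.
move=> jk sj; rewrite (place2_extend_left _ _ _ jk sj) nfL_place3_WV12 //; congr (nfL _).
apply: eq_place3 => p q z; rewrite exchange_big /=; apply: eq_bigr => v _.
rewrite -(sum_kron_mul k0 (fun u => rel_scale L * bqG L u v p q * h v z)).
by apply: eq_bigr => u _; ring.
Qed.

Lemma nfL_place2_pass_V s i k3 f1 h : (i.+2 < k)%N -> wnth s i.+2 = (false, k3) ->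
  nfL (place2 s i f1 true h)
  = nfL (place3 s i f1 false true (fun x p q => \sum_v rel_scale L * bqG L v k3 p q * h x v)).
Proof.
move=> ik si; rewrite (place2_extend_right _ _ _ ik si) nfL_place3_WV23 //; congr (nfL _).
apply: eq_place3 => x p q; apply: eq_bigr => v _.
rewrite -(sum_kron_mul k3 (fun w => rel_scale L * bqG L v w p q * h x v)).
by apply: eq_bigr => w _; ring.
Qed.

End Placement.

Section PlacedGenerators.
Variables (K : fieldType) (L : BQD K) (k : nat).
Local Notation word := (k.-tuple letter).
Local Notation T := (Tdeg K k).
Implicit Types (s t : word).

Lemma eq_wset2 t s i x y : (i.+1 < k)%N ->
  (t == wset2 s i x y) =
  [&& [forall j : 'I_k, ((j != i :> nat) && (j != i.+1 :> nat)) ==> (tnth t j == tnth s j)],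
      x == wnth t i & y == wnth t i.+1].
Proof.
move=> ik; apply/eqP/and3P => [->|[/forallP agree /eqP -> /eqP ->]].
  split; rewrite /wset2 ?wnth_set; try lia; decide_nat_eqs => //.
  apply/forallP => j; apply/implyP => /andP [ji ji1].
  by rewrite !(tnth_nth dflt) -!/(wnth _ _) !wnth_set ?(negbTE ji) ?(negbTE ji1) //; lia.
apply: eq_from_wnth => l lk; rewrite /wset2 !wnth_set; try lia.
case: eqP => [->//|li1]; case: eqP => [->//|li].
have := agree (Ordinal lk); rewrite /= !(tnth_nth dflt).
by move/eqP: li => ->; move/eqP: li1 => -> /eqP.
Qed.

Lemma elem2_tuple (F : letter -> letter -> K) x y : elem2 F [tuple x; y] = F x y.
Proof. by rewrite /elem2 ffunE. Qed.

Lemma placed_elem2 s i (F : letter -> letter -> K) : (i.+1 < k)%N ->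
  placed s i (elem2 F) = \sum_x \sum_y F x y *: basisT K (wset2 s i x y).
Proof.
move=> ik; apply/ffunP => t; rewrite ffunE sum_ffunE.
under eq_bigr => x _ do rewrite sum_ffunE.
under eq_bigr => x _ do under eq_bigr => y _ do rewrite !ffunE eq_wset2 //.
case: ifP => agree; last by symmetry; apply: big1 => x _; apply: big1 => y _; rewrite scaler0.
rewrite elem2_tuple (bigD1 (wnth t i)) //= (bigD1 (wnth t i.+1)) //= !eqxx /=.
rewrite big1 ?addr0 => [|y /negbTE ->]; last by rewrite /= scaler0.
rewrite big1 ?addr0 => [|x /negbTE nx]; last by apply: big1 => y _; rewrite nx /= scaler0.
by rewrite /wnth; exact: (esym (mulr1 _)).
Qed.

Lemma sum_letter (V : nmodType) (G : letter -> V) :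
  \sum_x G x = \sum_j G (true, j) + \sum_j G (false, j).
Proof.
transitivity (\sum_(b : bool) \sum_j G (b, j)); last by rewrite big_bool.
by rewrite pair_big; apply: eq_bigr => -[b j].
Qed.

Lemma sum_scale0 (F : ix -> T) : \sum_j (0 : K) *: F j = 0.
Proof. by apply: big1 => j _; rewrite scale0r. Qed.

Lemma placed_gen_a s i l : (i.+1 < k)%N ->
  placed s i (gen_a L l) = place2 s i false false (bq_a L l).
Proof.
move=> ik; rewrite placed_elem2 // sum_letter.
under eq_bigr => j _ do rewrite sum_letter /= !sum_scale0 add0r.
under [X in _ + X]eq_bigr => j _ do rewrite sum_letter /= !sum_scale0 add0r.
by rewrite big1_eq add0r.
Qed.

Lemma placed_gen_b s i l : (i.+1 < k)%N ->
  placed s i (gen_b L l) = place2 s i true true (bq_b L l).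
Proof.
move=> ik; rewrite placed_elem2 // sum_letter.
under eq_bigr => j _ do rewrite sum_letter /= !sum_scale0 addr0.
under [X in _ + X]eq_bigr => j _ do rewrite sum_letter /= !sum_scale0 add0r.
by rewrite big1_eq addr0.
Qed.

Lemma placed_gen_c s i : (i.+1 < k)%N ->
  placed s i (gen_c L) = place2 s i false true (bq_c L).
Proof.
move=> ik; rewrite placed_elem2 // sum_letter.
under eq_bigr => j _ do rewrite sum_letter /= !sum_scale0 add0r.
under [X in _ + X]eq_bigr => j _ do rewrite sum_letter /= !sum_scale0 addr0.
by rewrite big1_eq add0r.
Qed.

Lemma placed_gen_rel s i l r : (i.+1 < k)%N ->
  placed s i (gen_rel L l r) =
  basisT K (wset2 s i (true, l) (false, r)) - rel_scale L *: place2 s i false true (bqG L l r).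
Proof.
move=> ik; rewrite placed_elem2 // sum_letter.
under eq_bigr => j _ do rewrite sum_letter /= !sum_scale0 add0r.
under [X in _ + X]eq_bigr => j _ do rewrite sum_letter /= !sum_scale0 addr0.
rewrite /rel_scale scaleNr opprK -place2Z; congr (_ + _).
rewrite (bigD1 l) //= [X in _ + X]big1 ?addr0 => [|x /negbTE nx]; last first.
  by apply: big1 => y _; rewrite /kron eq_sym nx mul0r scale0r.
rewrite (bigD1 r) //= [X in _ + X]big1 ?addr0 => [|y /negbTE ny]; last first.
  by rewrite /kron (eq_sym r) ny mulr0 scale0r.
by rewrite /kron !eqxx mulr1 scale1r.
Qed.

End PlacedGenerators.

(** * Identities between the structure constants *)

Section Identities.
Variables (K : fieldType) (L : BQD K).
Local Notation a := (bq_a L). Local Notation A := (bq_A L).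
Local Notation b := (bq_b L). Local Notation B := (bq_B L).
Local Notation c := (bq_c L). Local Notation D := (bq_D L).
Local Notation G := (bqG L). Local Notation om := (bq_om L).
Local Notation sigma := (rel_scale L).
Local Notation rho := ((bq_q L + (bq_q L)^-1) ^- 2).
Local Notation kron := (kron K).

(* Matrix of (A (x) 1)(1 (x) a) : V (x) W -> W (x) V, from [v_r (x) w_l] to
   [w_v (x) v_w]; axiom [bq_ax12] says that G composed with it is rho (1 + c D). *)
Definition bqH (r l v w : ix) : K := \sum_y A r y v * a l y w.

Lemma bqG_bqH r l p q :
  \sum_v \sum_w G v w p q * bqH r l v w = rho * (kron r p * kron l q + c p q * D r l).
Proof. by rewrite -bq_ax12 /bqG /bqH !sum_ix; ring. Qed.

(* The coefficients produced by straightening [w (x) Im a], [w (x) Im c],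
   [Im b (x) v] and [Im c (x) v]. *)
Lemma straighten_Wa_coef k0 l x p q :
  \sum_v \sum_w sigma * G v w p q * (\sum_v' sigma * G k0 v' x v * a l v' w)
  = sigma ^+ 2 * rho * (a k0 x p * kron q l + B k0 l x * c p q).
Proof.
transitivity (sigma ^+ 2 * \sum_r a k0 x r * \sum_v \sum_w G v w p q * bqH r l v w).
  by rewrite /bqG /bqH !sum_ix; ring.
under eq_bigr => r _ do rewrite bqG_bqH.
rewrite (eq_bigr (fun r => (r == p)%:R * (rho * kron l q * a k0 x r)
                           + rho * c p q * (a k0 x r * D r l))) => [|r _]; last by rewrite /kron; ring.
by rewrite big_split /= sum_kron_mul -big_distrr /= -bq_ax6 /kron eq_sym; ring.
Qed.

Lemma straighten_Wc_coef k0 p q z :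
  \sum_v sigma * G k0 v p q * c v z = sigma * \sum_r a k0 p r * b r q z.
Proof. by under [X in _ = _ * X]eq_bigr => r _ do rewrite bq_ax9; rewrite /bqG !sum_ix; ring. Qed.

Lemma straighten_cV_coef k3 x p q :
  \sum_v sigma * G v k3 p q * c x v = sigma * om ^+ 2 * \sum_j a j x p * b k3 j q.
Proof.
transitivity (sigma * \sum_r (\sum_v c x v * a v p r) * A r k3 q).
  by rewrite /bqG !sum_ix; ring.
under eq_bigr => r _ do rewrite bq_ax5.
under [X in _ = _ * X]eq_bigr => j _ do rewrite bq_ax7.
by rewrite !sum_ix; ring: (bq_om3 L).
Qed.

Lemma straighten_bV_coef l k3 t u q :
  \sum_x \sum_p sigma * G x p t u * (\sum_w sigma * G w k3 p q * b l x w)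
  = sigma ^+ 2 * om ^+ 2 * rho * (kron t l * b k3 u q + c t u * \sum_j D l j * b k3 j q).
Proof.
transitivity (\sum_x \sum_p sigma * G x p t u *
                (\sum_e A l e x * \sum_w sigma * G w k3 p q * c e w)).
  apply: eq_bigr => x _; apply: eq_bigr => p _; congr (_ * _).
  by under eq_bigr => w _ do rewrite bq_ax9; rewrite !sum_ix; ring.
under eq_bigr => x _ do under eq_bigr => p _ do under eq_bigr => e _ do
  rewrite straighten_cV_coef.
transitivity (sigma ^+ 2 * om ^+ 2 *
                \sum_j b k3 j q * \sum_x \sum_p G x p t u * bqH l j x p).
  by rewrite /bqH !sum_ix; ring.
under eq_bigr => j _ do rewrite bqG_bqH.
rewrite (eq_bigr (fun j => (j == u)%:R * (rho * kron l t * b k3 j q)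
                           + rho * c t u * (D l j * b k3 j q))) => [|j _]; last by rewrite /kron; ring.
by rewrite big_split /= sum_kron_mul -big_distrr /= /kron eq_sym; ring.
Qed.

End Identities.

(** * Straightening the generators of I *)

Section NormalWords.
Variables (k m : nat).
Local Notation word := (k.-tuple letter).
Implicit Types (t : word).

Lemma isW_no_inversion t j d : ~~ [exists j : 'I_k, inversion t j] ->
  (j + d < k)%N -> isW (wnth t j) -> isW (wnth t (j + d)).
Proof.
move=> normal; elim: d => [|d IH] jdk wj; first by rewrite addn0.
have wjd : isW (wnth t (j + d)) by apply: IH => //; lia.
apply/negPn/negP => vjd1; case/existsP: normal.
have jd : (j + d < k)%N by lia.
by exists (Ordinal jd); rewrite /inversion /= -addnS jdk wjd.
Qed.

Lemma count_take_drop (T : Type) (a : pred T) (s : seq T) j :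
  count a s = (count a (take j s) + count a (drop j s))%N.
Proof. by rewrite -count_cat cat_take_drop. Qed.

Lemma normal_isW t : ~~ [exists j : 'I_k, inversion t j] -> count isV t = m ->
  forall j, (j < k)%N -> isW (wnth t j) = (m <= j)%N.
Proof.
move=> normal cnt j jk; case wj: (isW (wnth t j)).
  have no_V_after : count isV (drop j t) = 0%N.
    apply/eqP; rewrite -leqn0 leqNgt -has_count; apply/negP => /(has_nthP dflt) [] i.
    rewrite size_drop size_tuple nth_drop => ij.
    by have := isW_no_inversion normal (_ : (j + i < k)%N) wj; rewrite /wnth /isW /isV => ->; lia.
  apply/esym; rewrite -cnt (count_take_drop _ _ j) no_V_after addn0.
  by apply: leq_trans (count_size _ _) _; rewrite size_take size_tuple; case: ifP; lia.
have all_V_before : count isV (take j.+1 t) = j.+1.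
  have : all isV (take j.+1 t).
    apply/(all_nthP dflt) => i; rewrite size_take size_tuple => ij.
    rewrite nth_take; last by move: ij; case: ifP; lia.
    apply/negP => wi; have ijk : (i + (j - i) < k)%N by move: ij; case: ifP; lia.
    have := isW_no_inversion normal ijk; rewrite subnKC; last by move: ij; case: ifP; lia.
    by move: wj; rewrite /wnth /isW => -> /(_ wi).
  by rewrite all_count => /eqP ->; rewrite size_take size_tuple; case: ifP; lia.
by apply/esym/negbTE; rewrite -ltnNge -cnt (count_take_drop _ _ j.+1) all_V_before; lia.
Qed.

Lemma isW_normal t : (m <= k)%N -> (forall j, (j < k)%N -> isW (wnth t j) = (m <= j)%N) ->
  ~~ [exists j : 'I_k, inversion t j] /\ count isV t = m.
Proof.
move=> mk tW; split.
  apply/existsP => -[j /and3P [jk wj vj]].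
  have := tW j (ltnW jk); rewrite wj => mj.
  by move: vj; rewrite /isV -/(isW _) tW //; lia.
have no_V_after : count isV (drop m t) = 0%N.
  apply/eqP; rewrite -leqn0 leqNgt -has_count; apply/negP => /(has_nthP dflt) [] i.
  rewrite size_drop size_tuple nth_drop => im.
  by have := tW (m + i); rewrite /wnth /isW /isV => ->; lia.
have all_V_before : count isV (take m t) = m.
  have : all isV (take m t).
    apply/(all_nthP dflt) => i; rewrite size_take size_tuple => im.
    rewrite nth_take; last by move: im; case: ifP; lia.
    by have := tW i; rewrite /wnth /isW /isV => ->; move: im; case: ifP; lia.
  by rewrite all_count => /eqP ->; rewrite size_take size_tuple; case: ifP; lia.
by rewrite (count_take_drop _ _ m) all_V_before no_V_after addn0.
Qed.

End NormalWords.

Section StraightenGenerators.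
Variables (K : fieldType) (L : BQD K) (m n : nat).
Local Notation k := (m + n)%N.
Local Notation word := (k.-tuple letter).
Local Notation T := (Tdeg K k).
Local Notation I' := (idealI' L m n).
Implicit Types (s t : word).

(* Every word of [place2 s i f1 f2 h] has the V/W shape of [pattern s i f1 f2]. *)
Definition pattern s i f1 f2 : word := wset2 s i (f1, ord0) (f2, ord0).

Definition ideal_gen (f1 f2 : bool) (h : ix -> ix -> K) : Prop :=
  [\/ [/\ f1 = false, f2 = false & exists l, h = bq_a L l],
      [/\ f1 = true, f2 = true & exists l, h = bq_b L l] |
      [/\ f1 = false, f2 = true & h = bq_c L]].

Lemma isV_wset2_pattern s i f1 f2 x y l : (i.+1 < k)%N ->
  isV (wnth (wset2 s i (f1, x) (f2, y)) l) = isV (wnth (pattern s i f1 f2) l).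
Proof. by move=> ik; rewrite /pattern /wset2 !wnth_set; try lia; case: (l == i.+1); case: (l == i). Qed.

Lemma count_wset2_pattern s i f1 f2 x y : (i.+1 < k)%N ->
  count isV (wset2 s i (f1, x) (f2, y)) = count isV (pattern s i f1 f2).
Proof.
by move=> ik; rewrite !count_vweight; apply: eq_bigr => l _; rewrite isV_wset2_pattern.
Qed.

Lemma inversion_wset2_pattern s i f1 f2 x y j : (i.+1 < k)%N ->
  inversion (wset2 s i (f1, x) (f2, y)) j = inversion (pattern s i f1 f2) j.
Proof.
move=> ik; rewrite /inversion !isV_wset2_pattern //.
by rewrite -[isW _]negbK -[isW (wnth (pattern _ _ _ _) j)]negbK -!/(isV _) isV_wset2_pattern.
Qed.

Lemma VWword_wnth t : VWword t = [forall j : 'I_k, isW (wnth t j) == (m <= j)%N].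
Proof. by apply: eq_forallb => j; rewrite (tnth_nth dflt). Qed.

Lemma normal_VWword t : ~~ [exists j : 'I_k, inversion t j] -> count isV t = m -> VWword t.
Proof.
by move=> normal cnt; rewrite VWword_wnth; apply/forallP => j; rewrite (normal_isW normal cnt).
Qed.

Lemma placed_a_in_I' s i l : VWword s -> (i < m.-1)%N -> placed s i (gen_a L l) \in I'.
Proof.
move=> VWs im; apply: (subvP (addvSl _ _)); apply: (subvP (addvSl _ _)).
apply: memv_span; apply/flatten_mapP; exists s; first by rewrite mem_filter VWs mem_enum in_setT.
by apply: allpairs_f; rewrite ?mem_iota //; apply: map_f; rewrite mem_enum in_setT.
Qed.

Lemma placed_c_in_I' s : (0 < m)%N -> (0 < n)%N -> VWword s -> placed s m.-1 (gen_c L) \in I'.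
Proof.
move=> m0 n0 VWs; apply: (subvP (addvSl _ _)); apply: (subvP (addvSr _ _)).
by apply: memv_span; apply: map_f; rewrite mem_filter m0 n0 VWs mem_enum in_setT.
Qed.

Lemma placed_b_in_I' s i l : VWword s -> (m <= i < m + n.-1)%N -> placed s i (gen_b L l) \in I'.
Proof.
move=> VWs im; apply: (subvP (addvSr _ _)).
apply: memv_span; apply/flatten_mapP; exists s; first by rewrite mem_filter VWs mem_enum in_setT.
by apply: allpairs_f; rewrite ?mem_iota //; apply: map_f; rewrite mem_enum in_setT.
Qed.

Lemma nfL_place2_normal s i f1 f2 h : (i.+1 < k)%N ->
    ~~ [exists j : 'I_k, inversion (pattern s i f1 f2) j] ->
  nfL L (place2 s i f1 f2 h) = place2 (pattern s i f1 f2) i f1 f2 h.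
Proof.
move=> ik normal; rewrite nfL_place2 /place2; apply: eq_bigr => x _; apply: eq_bigr => y _.
rewrite nf_normal; first by congr (_ *: basisT K _); rewrite /pattern; solve_word.
by apply: first_inversion_None; under eq_existsb => j do rewrite inversion_wset2_pattern //.
Qed.

Lemma wnth_pattern s i f1 f2 : (i.+1 < k)%N ->
  wnth (pattern s i f1 f2) i = (f1, ord0) /\ wnth (pattern s i f1 f2) i.+1 = (f2, ord0).
Proof. by move=> ik; rewrite /pattern /wset2 !wnth_set; try lia; decide_nat_eqs. Qed.

Lemma nfL_gen_normal s i f1 f2 h : ideal_gen f1 f2 h -> (i.+1 < k)%N ->
    ~~ [exists j : 'I_k, inversion (pattern s i f1 f2) j] ->
    count isV (pattern s i f1 f2) = m ->
  nfL L (place2 s i f1 f2 h) \in I'.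
Proof.
move=> gen ik normal cnt; rewrite nfL_place2_normal //.
have VWp := normal_VWword normal cnt; have [pi pi1] := wnth_pattern s f1 f2 ik.
have := normal_isW normal cnt (ltnW ik); have := normal_isW normal cnt ik.
rewrite pi pi1 /isW /=.
case: gen => [[? ? [l ?]] | [? ? [l ?]] | [? ? ?]]; subst => /esym Wi1 /esym Wi.
- by rewrite -placed_gen_a //; apply: placed_a_in_I'; lia.
- by rewrite -placed_gen_b //; apply: placed_b_in_I'; lia.
- have ei : i = m.-1 by lia.
  by rewrite ei in VWp *; rewrite -placed_gen_c; [apply: placed_c_in_I' | ..]; lia.
Qed.

End StraightenGenerators.

Section Induction.
Variables (K : fieldType) (L : BQD K) (m n : nat).
Local Notation k := (m + n)%N.
Local Notation word := (k.-tuple letter).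
Local Notation I' := (idealI' L m n).
Local Notation a := (bq_a L). Local Notation b := (bq_b L).
Local Notation B := (bq_B L). Local Notation c := (bq_c L).
Local Notation D := (bq_D L). Local Notation om := (bq_om L).
Local Notation sigma := (rel_scale L).
Local Notation rho := ((bq_q L + (bq_q L)^-1) ^- 2).
Implicit Types (s t : word).

Definition nf_gens_in_I' (N : nat) := forall s i f1 f2 h,
  ideal_gen L f1 f2 h -> (i.+1 < k)%N ->
  (vweight id (pattern s i f1 f2) <= N)%N -> count isV (pattern s i f1 f2) = m ->
  nfL L (place2 s i f1 f2 h) \in I'.

Lemma nf_gens_in_I'0 : nf_gens_in_I' 0.
Proof.
move=> s i f1 f2 h gen ik w0 cnt; apply: nfL_gen_normal => //.
by apply/existsP => -[j /(vweight_swapS ord0 ord0)]; lia.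
Qed.

Variables (N : nat) (IH : nf_gens_in_I' N).

Lemma nfL_gen_window s i f1 f2 h t0 j : ideal_gen L f1 f2 h -> (i.+1 < k)%N ->
    (j + 3 <= k)%N ->
    (forall l, (l < j)%N || (j + 3 <= l < k)%N ->
       isV (wnth t0 l) = isV (wnth (pattern s i f1 f2) l)) ->
    (\sum_(j <= l < j + 3) isV (wnth (pattern s i f1 f2) l) * l
       < \sum_(j <= l < j + 3) isV (wnth t0 l) * l)%N ->
    (\sum_(j <= l < j + 3) isV (wnth (pattern s i f1 f2) l) * 1
       = \sum_(j <= l < j + 3) isV (wnth t0 l) * 1)%N ->
    (vweight id t0 <= N.+1)%N -> count isV t0 = m ->
  nfL L (place2 s i f1 f2 h) \in I'.
Proof.
move=> gen ik jk agree lt_weight eq_count w0 cnt0; apply: IH => //.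
  by have := vweight_local id jk agree; lia.
by have := vweight_local (fun=> 1%N) jk agree; move: cnt0; rewrite !count_vweight; lia.
Qed.

Ltac settle_window sj :=
  rewrite ?sum_window3 /pattern /wset2 ?wnth_set; try lia; decide_nat_eqs; rewrite ?sj /=; lia.

Lemma nfL_Wa_in_I' s j k0 l : (j.+2 < k)%N -> wnth s j = (true, k0) ->
    (vweight id (pattern s j.+1 false false) <= N.+1)%N ->
    count isV (pattern s j.+1 false false) = m ->
  nfL L (place2 s j.+1 false false (a l)) \in I'.
Proof.
move=> jk sj w0 cnt0; rewrite (nfL_place2_pass_W L _ _ jk sj) nfL_place3_WV23 //.
rewrite (eq_place3 _ _ _ _ _ (h2 := fun x p q => sigma ^+ 2 * rho * (a k0 x p * kron K q l)
                                    + sigma ^+ 2 * rho * (B k0 l x * c p q))); last first.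
  by move=> x p q; rewrite -mulrDr straighten_Wa_coef.
rewrite place3D !place3Z linearD !linearZ /=; apply: memvD; apply: memvZ.
- rewrite place3_split_last // linear_sum; apply: memv_suml => z _.
  rewrite (eq_place2 _ _ _ _ (h2 := fun x y => kron K z l * a k0 x y)) => [|x y]; last exact: mulrC.
  rewrite place2Z linearZ; apply: memvZ.
  apply: (nfL_gen_window (t0 := pattern s j.+1 false false) (j := j)) => //; try lia.
  + by apply: Or31; split => //; exists k0.
  + by move=> i /orP [] ?; settle_window sj.
  + by settle_window sj.
  + by settle_window sj.
- rewrite place3_split_first linear_sum; apply: memv_suml => x _.
  rewrite place2Z linearZ; apply: memvZ.
  apply: (nfL_gen_window (t0 := pattern s j.+1 false false) (j := j)) => //; try lia.
  + exact: Or33.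
  + by move=> i /orP [] ?; settle_window sj.
  + by settle_window sj.
  + by settle_window sj.
Qed.

Lemma nfL_Wc_in_I' s j k0 : (j.+2 < k)%N -> wnth s j = (true, k0) ->
    (vweight id (pattern s j.+1 false true) <= N.+1)%N ->
    count isV (pattern s j.+1 false true) = m ->
  nfL L (place2 s j.+1 false true c) \in I'.
Proof.
move=> jk sj w0 cnt0; rewrite (nfL_place2_pass_W L _ _ jk sj).
rewrite (eq_place3 _ _ _ _ _ (h2 := fun p q z => \sum_r (sigma * a k0 p r) * b r q z));
  last by move=> p q z; rewrite straighten_Wc_coef big_distrr; apply: eq_bigr => r _ /=; rewrite mulrA.
rewrite place3_split_first linear_sum; apply: memv_suml => p _.
rewrite place2_sum linear_sum; apply: memv_suml => r _; rewrite linearZ; apply: memvZ.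
apply: (nfL_gen_window (t0 := pattern s j.+1 false true) (j := j)) => //; try lia.
- by apply: Or32; split => //; exists r.
- by move=> i /orP [] ?; settle_window sj.
- by settle_window sj.
- by settle_window sj.
Qed.

Lemma nfL_bV_in_I' s i k3 l : (i.+2 < k)%N -> wnth s i.+2 = (false, k3) ->
    (vweight id (pattern s i true true) <= N.+1)%N ->
    count isV (pattern s i true true) = m ->
  nfL L (place2 s i true true (b l)) \in I'.
Proof.
move=> ik si w0 cnt0; rewrite (nfL_place2_pass_V L _ _ ik si) nfL_place3_WV12 //.
rewrite (eq_place3 _ _ _ _ _ (h2 := fun x y q =>
    sigma ^+ 2 * om ^+ 2 * rho * (kron K x l * b k3 y q)
    + sigma ^+ 2 * om ^+ 2 * rho * (c x y * \sum_j D l j * b k3 j q))); last first.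
  by move=> x y q; rewrite -mulrDr straighten_bV_coef.
rewrite place3D !place3Z linearD !linearZ /=; apply: memvD; apply: memvZ.
- rewrite place3_split_first linear_sum; apply: memv_suml => x _.
  rewrite place2Z linearZ; apply: memvZ.
  apply: (nfL_gen_window (t0 := pattern s i true true) (j := i)) => //; try lia.
  + by apply: Or32; split => //; exists k3.
  + by move=> j /orP [] ?; settle_window si.
  + by settle_window si.
  + by settle_window si.
- rewrite place3_split_last // linear_sum; apply: memv_suml => q _.
  rewrite (eq_place2 _ _ _ _ (h2 := fun x y => (\sum_j D l j * b k3 j q) * c x y)) => [|x y];
    last exact: mulrC.
  rewrite place2Z linearZ; apply: memvZ.
  apply: (nfL_gen_window (t0 := pattern s i true true) (j := i)) => //; try lia.
  + exact: Or33.
  + by move=> j /orP [] ?; settle_window si.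
  + by settle_window si.
  + by settle_window si.
Qed.

Lemma nfL_cV_in_I' s i k3 : (i.+2 < k)%N -> wnth s i.+2 = (false, k3) ->
    (vweight id (pattern s i false true) <= N.+1)%N ->
    count isV (pattern s i false true) = m ->
  nfL L (place2 s i false true c) \in I'.
Proof.
move=> ik si w0 cnt0; rewrite (nfL_place2_pass_V L _ _ ik si).
rewrite (eq_place3 _ _ _ _ _ (h2 := fun x p q => sigma * om ^+ 2 * \sum_j a j x p * b k3 j q));
  last by move=> x p q; rewrite straighten_cV_coef.
rewrite place3_split_last // linear_sum; apply: memv_suml => q _.
rewrite (eq_place2 _ _ _ _ (h2 := fun x p => \sum_j (sigma * om ^+ 2 * b k3 j q) * a j x p));
  last by move=> x p; rewrite big_distrr; apply: eq_bigr => j _ /=; ring.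
rewrite place2_sum linear_sum; apply: memv_suml => r _; rewrite linearZ; apply: memvZ.
apply: (nfL_gen_window (t0 := pattern s i false true) (j := i)) => //; try lia.
- by apply: Or31; split => //; exists r.
- by move=> j /orP [] ?; settle_window si.
- by settle_window si.
- by settle_window si.
Qed.

Lemma nfL_gen_far s i f1 f2 h j : ideal_gen L f1 f2 h -> (i.+1 < k)%N ->
    inversion (pattern s i f1 f2) j -> (j.+1 < i)%N || (i.+1 < j)%N ->
    (vweight id (pattern s i f1 f2) <= N.+1)%N -> count isV (pattern s i f1 f2) = m ->
  nfL L (place2 s i f1 f2 h) \in I'.
Proof.
move=> gen ik inv_j apart w0 cnt0.
have pattern_swap p q : pattern (swap s j p q) i f1 f2 = swap (pattern s i f1 f2) j p q.
  by rewrite /pattern /swap; solve_word.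
have inv_s : inversion s j.
  by move: inv_j; rewrite /inversion /pattern /wset2 !wnth_set; try lia; decide_nat_eqs.
rewrite (nfL_place2_far _ _ _ _ ik inv_s apart); apply: memv_suml => p _; apply: memv_suml => q _.
apply: memvZ; apply: IH; rewrite ?pattern_swap ?count_swap //.
by have := vweight_swapS p q inv_j; lia.
Qed.

Lemma nf_gens_in_I'S : nf_gens_in_I' N.+1.
Proof.
move=> s i f1 f2 h gen ik w0 cnt0.
have [/existsP [[j ?] /= inv_j] | normal] := boolP [exists j : 'I_k, inversion (pattern s i f1 f2) j];
  last exact: nfL_gen_normal.
have [pi pi1] := wnth_pattern s f1 f2 ik.
have pattern_far l : l != i -> l != i.+1 -> wnth (pattern s i f1 f2) l = wnth s l.
  by move=> li li1; rewrite /pattern /wset2 !wnth_set ?(negbTE li) ?(negbTE li1) //; lia.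
move: (inv_j) => /and3P [jk wj vj].
have [apart | near] := boolP ((j.+1 < i) || (i.+1 < j))%N; first exact: nfL_gen_far inv_j apart _ _.
have [ji | [ji | ji]] : j.+1 = i \/ j = i \/ j = i.+1 by lia.
- subst i; rewrite pi pattern_far in vj wj; try lia.
  have sj : wnth s j = (true, (wnth s j).2) by move: wj; case: (wnth s j) => -[].
  case: gen => [[? ? [l ?]] | [? ? _] | [? ? ?]]; subst => //.
  + exact: nfL_Wa_in_I' sj w0 cnt0.
  + exact: nfL_Wc_in_I' sj w0 cnt0.
- by subst j; rewrite pi pi1 in wj vj; case: gen => -[? ? _]; subst.
- subst j; rewrite pi1 pattern_far in vj wj; try lia.
  have si : wnth s i.+2 = (false, (wnth s i.+2).2) by move: vj; case: (wnth s i.+2) => -[].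
  case: gen => [[? ? _] | [? ? [l ?]] | [? ? ?]]; subst => //.
  + exact: nfL_bV_in_I' si w0 cnt0.
  + exact: nfL_cV_in_I' si w0 cnt0.
Qed.

End Induction.

Lemma nfL_gen_in_I' (K : fieldType) (L : BQD K) (m n : nat) s i f1 f2 h :
    ideal_gen L f1 f2 h -> (i.+1 < m + n)%N -> count isV (pattern s i f1 f2) = m ->
  nfL L (place2 s i f1 f2 h) \in idealI' L m n.
Proof.
move=> gen ik cnt; have : nf_gens_in_I' L m n (vweight id (pattern s i f1 f2)).
  by elim: (vweight id _) => [|N IH]; [exact: nf_gens_in_I'0 | exact: nf_gens_in_I'S].
by apply.
Qed.

(** * The isomorphism *)

Section Ideals.
Variables (K : fieldType) (L : BQD K) (k : nat).
Local Notation word := (k.-tuple letter).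
Local Notation T := (Tdeg K k).
Implicit Types (s t : word).

Lemma placed_in_idealI s i g : (i.+1 < k)%N ->
  g \in gens_a L ++ gens_b L ++ gen_c L :: gens_rel L -> placed s i g \in idealI L k.
Proof.
move=> ik gen; apply: memv_span; apply/flatten_mapP; exists s; first by rewrite mem_enum in_setT.
by apply: allpairs_f => //; rewrite mem_iota; lia.
Qed.

Lemma basis_sub_nf_in_idealI t : basisT K t - nf L t \in idealI L k.
Proof.
move: {-1}(vweight id t).+1 (ltnSn (vweight id t)) => N.
elim: N t => // N IH t ltN.
case E: (first_inversion t) => [j|]; last by rewrite nf_normal // subrr mem0v.
have inv_j := first_inversionP E; have /and3P [jk wj vj] := inv_j.
set sw := \sum_p \sum_q swap_coef L t j p q *: basisT K (swap t j p q).
have -> : basisT K t - nf L t = (basisT K t - sw) + (sw - nf L t) by rewrite addrA subrK.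
apply: memvD.
  have tj : wnth t j = (true, (wnth t j).2) by move: wj; case: (wnth t j) => -[].
  have tj1 : wnth t j.+1 = (false, (wnth t j.+1).2) by move: vj; case: (wnth t j.+1) => -[].
  have -> : basisT K t - sw = placed t j (gen_rel L (wnth t j).2 (wnth t j.+1).2).
    rewrite placed_gen_rel // -tj -tj1 /wset2 !wset_id //; try lia.
    rewrite /sw /place2 scaler_sumr; congr (_ - _); apply: eq_bigr => p _.
    by rewrite scaler_sumr; apply: eq_bigr => q _; rewrite scalerA.
  apply: placed_in_idealI => //.
  by rewrite !mem_cat inE; apply/or4P; apply: Or44; apply: allpairs_f; rewrite mem_enum in_setT.
rewrite (nf_first L E) /sw -sumrB; apply: memv_suml => p _; rewrite -sumrB.
apply: memv_suml => q _; rewrite -scalerBr; apply: memvZ; apply: IH.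
by have := vweight_swapS p q inv_j; lia.
Qed.

Lemma nfL_placed_rel s i l r : (i.+1 < k)%N -> nfL L (placed s i (gen_rel L l r)) = 0.
Proof.
move=> ik; have inv_i : inversion (wset2 s i (true, l) (false, r)) i.
  by rewrite /inversion /wset2 !wnth_set; try lia; decide_nat_eqs; rewrite ik.
rewrite placed_gen_rel // linearB linearZ /= nfL_basis nfL_place2 (nf_step L inv_i).
apply/eqP; rewrite subr_eq0 scaler_sumr; apply/eqP; apply: eq_bigr => p _; rewrite scaler_sumr.
apply: eq_bigr => q _; rewrite scalerA /swap_coef /swap /wset2 !wnth_set; try lia.
by decide_nat_eqs; congr (_ *: nf L _); solve_word.
Qed.


End Ideals.

Section Bidegree.
Variables (K : fieldType) (L : BQD K) (m n : nat).
Local Notation k := (m + n)%N.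
Local Notation word := (k.-tuple letter).
Local Notation T := (Tdeg K k).
Local Notation I' := (idealI' L m n).
Implicit Types (s t : word).

(* Projecting onto bidegree (m, n) first makes the map kill the generators of I of
   other bidegrees, whose normal forms lie outside I'. *)
Definition bideg_part (u : T) : T := [ffun t : word => if count isV t == m then u t else 0].

Lemma bideg_part_is_linear : linear bideg_part.
Proof. by move=> a u v; apply/ffunP => t; rewrite !ffunE; case: ifP; rewrite ?scaler0 ?addr0. Qed.

HB.instance Definition _ :=
  GRing.isLinear.Build K T T *:%R bideg_part bideg_part_is_linear.

Definition nf_bideg (u : T) : T := nfL L (bideg_part u).

Lemma nf_bideg_is_linear : linear nf_bideg.
Proof. by move=> a u v; rewrite /nf_bideg !linearP. Qed.

HB.instance Definition _ := GRing.isLinear.Build K T T *:%R nf_bideg nf_bideg_is_linear.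

Lemma bideg_part_basis t :
  bideg_part (basisT K t) = if count isV t == m then basisT K t else 0.
Proof.
apply/ffunP => u; rewrite !ffunE; have [->|/negbTE ne] := eqVneq u t.
  by case: ifP; rewrite ?ffunE ?eqxx.
by do 2!case: ifP => _; rewrite ?ffunE ?ne.
Qed.

Lemma bideg_part_place2 s i f1 f2 h : (i.+1 < k)%N ->
  bideg_part (place2 s i f1 f2 h)
  = if count isV (pattern s i f1 f2) == m then place2 s i f1 f2 h else 0.
Proof.
move=> ik; rewrite linear_sum /place2; under eq_bigr => x _ do
  (rewrite linear_sum; under eq_bigr => y _ do
     rewrite linearZ /= bideg_part_basis count_wset2_pattern //).
by case: ifP => // _; rewrite big1 // => x _; rewrite big1 // => y _; rewrite scaler0.
Qed.

Lemma nf_bideg_basis t : count isV t = m -> nf_bideg (basisT K t) = nf L t.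
Proof. by move=> cnt; rewrite /nf_bideg bideg_part_basis cnt eqxx nfL_basis. Qed.

Lemma basis_in_TVTW t : VWword t -> basisT K t \in TVTW K m n.
Proof. by move=> VWt; apply: memv_span; apply: map_f; rewrite mem_filter VWt mem_enum in_setT. Qed.

Lemma basis_in_Tbideg t : count isV t = m -> basisT K t \in Tbideg K m n.
Proof.
by move=> cnt; apply: memv_span; apply: map_f; rewrite mem_filter cnt eqxx mem_enum in_setT.
Qed.

Lemma nf_in_TVTW t : count isV t = m -> nf L t \in TVTW K m n.
Proof.
move: {-1}(vweight id t).+1 (ltnSn (vweight id t)) => N.
elim: N t => // N IH t ltN cnt.
case E: (first_inversion t) => [j|]; last first.
  by rewrite nf_normal //; apply/basis_in_TVTW/normal_VWword => //; exact: first_inversionN.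
have inv_j := first_inversionP E; rewrite (nf_first L E).
apply: memv_suml => p _; apply: memv_suml => q _; apply: memvZ; apply: IH.
- by have := vweight_swapS p q inv_j; lia.
- by rewrite count_swap.
Qed.

Lemma idealI'_sub_idealI : (I' <= idealI L k)%VS.
Proof.
rewrite !subv_add; apply/andP; split; first (apply/andP; split).
- apply/span_subvP => v /flatten_mapP [s _ /allpairsP [[i g] [/= + + ->]]].
  by rewrite mem_iota => ii gen; apply: placed_in_idealI; [lia | rewrite mem_cat gen].
- apply/span_subvP => v /mapP [s]; rewrite mem_filter => /andP [/andP [/andP [m0 n0] _] _] ->.
  by apply: placed_in_idealI; [lia | rewrite !mem_cat inE eqxx !orbT].
- apply/span_subvP => v /flatten_mapP [s _ /allpairsP [[i g] [/= + + ->]]].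
  by rewrite mem_iota => ii gen; apply: placed_in_idealI; [lia | rewrite !mem_cat gen orbT].
Qed.

Lemma nf_bideg_placed_gen s i f1 f2 h : ideal_gen L f1 f2 h -> (i.+1 < k)%N ->
  nf_bideg (place2 s i f1 f2 h) \in I'.
Proof.
move=> gen ik; rewrite /nf_bideg bideg_part_place2 //.
by case: eqP => [cnt | _]; [exact: nfL_gen_in_I' | rewrite linear0 mem0v].
Qed.

Lemma nf_bideg_placed_rel s i l r : (i.+1 < k)%N -> nf_bideg (placed s i (gen_rel L l r)) = 0.
Proof.
move=> ik; have inv_i : inversion (pattern s i true false) i.
  by have [pi pi1] := wnth_pattern s true false ik; rewrite /inversion pi pi1 ik.
have counts : count isV (pattern s i false true) = count isV (pattern s i true false).
  have -> : pattern s i false true = swap (pattern s i true false) i ord0 ord0.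
    by rewrite /pattern /swap; solve_word.
  exact: count_swap.
rewrite /nf_bideg placed_gen_rel // linearB linearZ /= bideg_part_basis bideg_part_place2 //.
rewrite counts (count_wset2_pattern _ _ _ _ _ ik).
case: eqP => _; last by rewrite scaler0 subr0 linear0.
by rewrite -placed_gen_rel // nfL_placed_rel.
Qed.

Lemma nf_bideg_Tbideg : (linfun nf_bideg @: Tbideg K m n <= TVTW K m n)%VS.
Proof.
rewrite limg_span; apply/span_subvP => v /mapP [u /mapP [t]].
by rewrite mem_filter => /andP [/eqP cnt _] -> ->; rewrite lfunE /= nf_bideg_basis // nf_in_TVTW.
Qed.

Lemma nf_bideg_idealI : (linfun nf_bideg @: idealI_bideg L m n <= I')%VS.
Proof.
apply: subv_trans (limgS _ (capvSl _ _)) _; rewrite limg_span.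
apply/span_subvP => v /mapP [u /flatten_mapP [s _ /allpairsP [[i g] [/= ii gen ->]]] ->].
have ik : (i.+1 < k)%N by move: ii; rewrite mem_iota; lia.
rewrite lfunE /=; move: gen; rewrite !mem_cat inE.
case/or4P=> [/mapP [l _ ->] | /mapP [l _ ->] | /eqP -> | /allpairsP [[l r] [_ _ ->]]].
- by rewrite placed_gen_a //; apply: nf_bideg_placed_gen => //; apply: Or31; split => //; exists l.
- by rewrite placed_gen_b //; apply: nf_bideg_placed_gen => //; apply: Or32; split => //; exists l.
- by rewrite placed_gen_c //; apply: nf_bideg_placed_gen => //; apply: Or33.
- by rewrite nf_bideg_placed_rel // mem0v.
Qed.

Lemma nf_bideg_kernel x : x \in Tbideg K m n -> linfun nf_bideg x \in I' ->
  x \in idealI_bideg L m n.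
Proof.
move=> x_bideg fx_I'; rewrite memv_cap x_bideg andbT -(subrK (linfun nf_bideg x) x).
apply: memvD; last exact: subvP idealI'_sub_idealI _ fx_I'.
suff : ((\1 - linfun nf_bideg)%VF @: Tbideg K m n <= idealI L k)%VS.
  by move/subvP/(_ _ (memv_img _ x_bideg)); rewrite add_lfunE opp_lfunE id_lfunE.
rewrite limg_span; apply/span_subvP => v /mapP [u /mapP [t]].
rewrite mem_filter => /andP [/eqP cnt _] -> ->.
by rewrite add_lfunE opp_lfunE id_lfunE lfunE /= nf_bideg_basis // basis_sub_nf_in_idealI.
Qed.

Lemma TVTW_sub_nf_bideg : (TVTW K m n <= linfun nf_bideg @: Tbideg K m n + I')%VS.
Proof.
apply: subv_trans (addvSl _ _); apply/span_subvP => v /mapP [t].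
rewrite mem_filter VWword_wnth => /andP [/forallP VWt _] ->.
have [normal cnt] := isW_normal (leq_addr n m) (fun j jk => eqP (VWt (Ordinal jk))).
have nf_t : linfun nf_bideg (basisT K t) = basisT K t.
  by rewrite lfunE /= nf_bideg_basis // nf_normal // first_inversion_None.
by rewrite -nf_t; apply/memv_img/basis_in_Tbideg.
Qed.

End Bidegree.

Theorem lemma5p1 (R : realType) (L : BQD R[i]) :
  forall m n : nat, exists f : 'End(Tdeg R[i] (m + n)),
    induces_quot_iso (Tbideg R[i] m n) (idealI_bideg L m n)
                     (TVTW R[i] m n) (idealI' L m n) f.
Proof.
move=> m n; exists (linfun (@nf_bideg _ L m n)); split.
- exact: nf_bideg_Tbideg.
- exact: nf_bideg_idealI.
- exact: nf_bideg_kernel.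
- exact: TVTW_sub_nf_bideg.
Qed.
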